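(* Let $x$ be a $\theta$-cyclic point such that $G_x$ has exactly $k$ critical cuts, and let $U$ be a critical cut of $G_x$. Then $G_x^U$ (with the point $x^U$) has at most $k-1$ critical cuts.
   Context: $\mathrm{SUBT}(K_n)=\{x\in[0,1]^{E_n}: x(\delta(\{i\}))=2\ \forall i,\ x(\delta(U))\ge2\ \forall\,\emptyset\ne U\subsetneq V_n\}$ where $K_n$ is the complete graph on $V_n=\{1,\ldots,n\}$ with edge set $E_n$ and $\delta(U)$ is the set of edges with exactly one endpoint in $U$. $G_x=(V_n,E_x)$, $E_x=\{e:x_e>0\}$. A $\theta$-cyclic point ($0<\theta\le\frac12$) is $x\in\mathrm{SUBT}(K_n)\cap\{0,\theta,1-\theta,1\}^{E_n}$ with $G_x$ of maximum degree at most 3 and every vertex incident to an edge of $x$-value 1. A cut $U$ of a graph with vertex set $V$ is proper if $|U|\ge2$ and $|V\setminus U|\ge2$. A critical cut is a proper cut $U$ with $|\delta(U)|=3$, exactly one edge of $\delta(U)$ of $x$-value 1, and the edges of $\delta(U)$ having pairwise distinct endpoints in $U$ and pairwise distinct endpoints outside $U$; a cut and its complement are regarded as the same cut. $G_x^U$ is obtained from $G_x$ by identifying all vertices of $V_n\setminus U$ into a single vertex and deleting loops; $x^U$ assigns each edge of $G_x^U$ its $x$-value. *)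

From HB Require Import structures.
From mathcomp Require Import all_boot all_order all_algebra.
Set Implicit Arguments. Unset Strict Implicit. Unset Printing Implicit Defensive.
Import Order.TTheory GRing.Theory Num.Theory.
Local Open Scope ring_scope.

(* A weighted graph on a finite vertex type T is given by a symmetric
   weight function w : T -> T -> R; its (simple) support graph has an edge
   {i,j} iff i <> j and w i j > 0. *)
Definition sedge (R : numDomainType) (T : finType) (w : T -> T -> R) (i j : T) : bool :=
  (i != j) && (0 < w i j).

Definition cut_edges (R : numDomainType) (T : finType) (w : T -> T -> R)
    (U : {set T}) : {set T * T} :=
  [set p : T * T | [&& p.1 \in U, p.2 \notin U & sedge w p.1 p.2]].

Definition proper_cut (T : finType) (U : {set T}) : bool :=
  (2 <= #|U|)%N && (2 <= #|~: U|)%N.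

Definition critical_cut (R : numDomainType) (T : finType) (w : T -> T -> R)
    (U : {set T}) : bool :=
  [&& proper_cut U,
      #|cut_edges w U| == 3%N,
      #|[set p in cut_edges w U | w p.1 p.2 == 1]| == 1%N,
      #|[set p.1 | p in cut_edges w U]| == 3%N &
      #|[set p.2 | p in cut_edges w U]| == 3%N].

(* A cut and its complement are the same cut; critical_cut is invariant under
   complement and U <> ~: U, so the number of critical cuts is half the number
   of vertex sets U that are critical. *)
Definition num_critical_cuts (R : numDomainType) (T : finType) (w : T -> T -> R) : nat :=
  (#|[set U : {set T} | critical_cut w U]| ./2)%N.

(* x in SUBT(K_n); vertices are 'I_n, x is a symmetric function on pairs,
   diagonal values are irrelevant. *)
Definition in_SUBT (R : realFieldType) (n : nat) (x : 'I_n -> 'I_n -> R) : Prop :=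
  [/\ forall i j, x i j = x j i,
      forall i j, i != j -> 0 <= x i j <= 1,
      forall i : 'I_n, \sum_(j | j != i) x i j = 2 &
      forall U : {set 'I_n}, U != set0 -> U != setT ->
        2 <= \sum_(i in U) \sum_(j in ~: U) x i j].

Definition theta_cyclic (R : realFieldType) (n : nat) (theta : R)
    (x : 'I_n -> 'I_n -> R) : Prop :=
  [/\ 0 < theta <= 2^-1,
      in_SUBT x,
      forall i j, i != j -> x i j \in [:: 0; theta; 1 - theta; 1],
      forall i, (#|[set j | sedge x i j]| <= 3)%N &
      forall i, exists j, j != i /\ x i j = 1].

(* G_x^U: vertex set U plus one new vertex (None) for the contracted V \ U;
   loops deleted.  The weight of an edge a--(V\U) is the sum of the x-values
   of the edges from a to V \ U (for a critical cut U there is at most one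
   such edge, so this is its x-value). *)
Definition contract_weight (R : realFieldType) (n : nat) (U : {set 'I_n})
    (x : 'I_n -> 'I_n -> R) :
    option {i : 'I_n | i \in U} -> option {i : 'I_n | i \in U} -> R :=
  fun a b =>
    match a, b with
    | Some a, Some b => x (val a) (val b)
    | Some a, None => \sum_(j in ~: U) x (val a) j
    | None, Some b => \sum_(j in ~: U) x j (val b)
    | None, None => 0
    end.
Arguments contract_weight {R n} U x _ _.

From HB Require Import structures.
From mathcomp Require Import all_boot all_order all_algebra.
Import Order.TTheory GRing.Theory Num.Theory.
Local Open Scope ring_scope.

(* Let f : V -> U + {v*} be the contraction map, the identity on
   U and sending V \ U to the new vertex v*.  Since U is critical, every vertex
   of U has at most one G_x-neighbour outside U, so every edge of G_x^U carries
   the x-value of a unique edge of G_x, and for each vertex set W of G_x^U the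
   map (i, j) |-> (f i, f j) is a weight-preserving bijection from
   delta(f^-1 W) onto delta(W).  Hence f^-1 W is a critical cut of G_x whenever
   W is a critical cut of G_x^U; moreover W |-> f^-1 W is injective (f is
   onto) and never hits U or V \ U, since each side of a proper cut has at
   least two vertices.  Thus G_x^U has at most (number of critical vertex sets
   of G_x) - 2 critical vertex sets, and halving gives the bound k - 1.
   The file proves general facts on cuts of symmetric weights and on
   preimages first, then the contraction lemmas in a section, then the
   theorem. *)

Lemma critical_fst_inj {R : numDomainType} {T : finType} {w : T -> T -> R}
    {A : {set T}} :
  critical_cut w A -> {in cut_edges w A &, injective (fun p => p.1)}.
Proof. by case/and5P => _ /eqP C3 _ /eqP F3 _; apply/imset_injP; rewrite F3 C3. Qed.

Lemma critical_snd_inj {R : numDomainType} {T : finType} {w : T -> T -> R}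
    {A : {set T}} :
  critical_cut w A -> {in cut_edges w A &, injective (fun p => p.2)}.
Proof. by case/and5P => _ /eqP C3 _ _ /eqP S3; apply/imset_injP; rewrite S3 C3. Qed.

Lemma card_filter_imset (T1 T2 : finType) (g : T1 -> T2) (D : {set T1})
    (P : pred T1) (Q : pred T2) :
  {in D &, injective g} -> {in D, forall p, Q (g p) = P p} ->
  #|[set q in g @: D | Q q]| = #|[set p in D | P p]|.
Proof.
move=> g_inj gQ; rewrite -(card_in_imset (f := g)); last first.
  by move=> a b; rewrite !inE => /andP[aD _] /andP[bD _]; apply: g_inj.
apply: eq_card => q; rewrite !inE; apply/andP/imsetP.
- case=> /imsetP[p pD ->] Qgp; exists p => //; by rewrite inE pD -gQ.
- case=> p; rewrite inE => /andP[pD Pp] ->; by rewrite imset_f // gQ.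
Qed.

Lemma sedge_sym {R : numDomainType} {T : finType} {w : T -> T -> R} :
  (forall i j, w i j = w j i) -> forall i j, sedge w i j = sedge w j i.
Proof. by move=> wsym i j; rewrite /sedge eq_sym wsym. Qed.

(* Critical cuts of a symmetric weight are closed under complement, since
   reversing the edges maps delta(A) onto delta(~A). *)
Lemma critical_cutC (R : numDomainType) (T : finType) (w : T -> T -> R)
    (A : {set T}) :
  (forall i j, w i j = w j i) -> critical_cut w A -> critical_cut w (~: A).
Proof.
move=> wsym Acrit; set swap := fun p : T * T => (p.2, p.1).
have swapK : involutive swap by case.
have cutC : cut_edges w (~: A) = swap @: cut_edges w A.
  apply/setP => -[i j]; rewrite -[in RHS](swapK (i, j)).
  rewrite (mem_imset _ _ (inv_inj swapK)) !inE negbK /=.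
  by rewrite (sedge_sym wsym) andbCA.
move: Acrit => /and5P[/andP[P1 P2] /eqP C3 /eqP C1 /eqP F3 /eqP S3].
apply/and5P; split.
- by rewrite /proper_cut setCK P1 P2.
- by rewrite cutC card_imset ?C3 //; apply: inv_inj.
- rewrite cutC (@card_filter_imset _ _ swap _ (fun p => w p.1 p.2 == 1)) ?C1 //.
  + by move=> a b _ _; apply: inv_inj.
  + by move=> p _ /=; rewrite wsym.
- by rewrite cutC -imset_comp (@eq_imset _ _ _ (fun p => p.2)) ?S3 //; case.
- by rewrite cutC -imset_comp (@eq_imset _ _ _ (fun p => p.1)) ?F3 //; case.
Qed.

Lemma proper_cut_neqC (T : finType) (A : {set T}) : proper_cut A -> A != ~: A.
Proof.
case/andP => A2 _; have : (0 < #|A|)%N by apply: leq_trans A2.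
rewrite card_gt0 => /set0Pn[a aA]; apply/eqP => /setP/(_ a).
by rewrite inE aA.
Qed.

Lemma sum_gt0_exists {R : realDomainType} {T : finType} {A : {pred T}}
    {F : T -> R} :
  0 < \sum_(j in A) F j -> exists2 j, j \in A & 0 < F j.
Proof.
move=> sum_gt0; apply/exists_inP; apply: contraTT sum_gt0 => /exists_inP noPos.
rewrite -leNgt; apply: sumr_le0 => j jA; rewrite leNgt.
by apply/negP => Fj; apply: noPos; exists j.
Qed.

Lemma preimset_surj_inj {T1 T2 : finType} {f : T1 -> T2} :
  (forall y, exists x, f x = y) -> injective (fun W : {set T2} => f @^-1: W).
Proof.
move=> f_onto W1 W2 /setP eqW; apply/setP => y; have [x <-] := f_onto y.
by have := eqW x; rewrite !inE.
Qed.

Lemma card_preimset_surj {T1 T2 : finType} {f : T1 -> T2} {W : {set T2}} :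
  (forall y, exists x, f x = y) -> (#|W| <= #|f @^-1: W|)%N.
Proof.
move=> f_onto; apply: leq_trans (leq_imset_card f _); apply: subset_leq_card.
apply/subsetP => y yW; have [x fx] := f_onto y.
by apply/imsetP; exists x; rewrite ?inE fx.
Qed.

(* Dropping two members from the critical vertex sets drops the number of
   cuts (pairs {A, ~A}) by one. *)
Lemma half_card_drop2 {T : finType} {C : {set T}} {a b : T} {m : nat} :
  a \in C -> b \in C -> a != b -> (m <= #|C :\ a :\ b|)%N ->
  (m./2 <= #|C|./2 - 1)%N.
Proof.
move=> aC bC ab le_m.
rewrite (cardsD1 a C) aC (cardsD1 b (C :\ a)) !inE eq_sym ab bC.
by rewrite /= subn1; apply: half_leq.
Qed.

Section Contraction.
Variables (R : realFieldType) (n : nat) (x : 'I_n -> 'I_n -> R) (U : {set 'I_n}).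
Hypothesis xsym : forall i j, x i j = x j i.
Hypothesis x_ge0 : forall i j, i != j -> 0 <= x i j.
Hypothesis Ucrit : critical_cut x U.

Local Notation V' := (option {i : 'I_n | i \in U}).
Local Notation xU := (contract_weight U x).

Definition contract_vertex (i : 'I_n) : V' := insub i.

Lemma contract_val (a : {i : 'I_n | i \in U}) : contract_vertex (val a) = Some a.
Proof. exact: valK. Qed.

Lemma contract_out {i} : i \notin U -> contract_vertex i = None.
Proof. by move=> iU; rewrite /contract_vertex insubF // (negbTE iU). Qed.

Lemma contract_in {i} (iU : i \in U) : contract_vertex i = Some (Sub i iU).
Proof. by rewrite /contract_vertex insubT. Qed.

Lemma contract_eq {i i'} : contract_vertex i = contract_vertex i' ->
  i = i' \/ (i \notin U /\ i' \notin U).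
Proof.
case: (boolP (i \in U)) => iU; case: (boolP (i' \in U)) => i'U; try by right.
- by rewrite (contract_in iU) (contract_in i'U) => -[]; left.
- by rewrite (contract_in iU) (contract_out i'U).
- by rewrite (contract_out iU) (contract_in i'U).
Qed.

(* The new vertex has a preimage because V \ U is nonempty. *)
Lemma contract_surj (o : V') : exists i, contract_vertex i = o.
Proof.
case: o => [a|]; first by exists (val a); rewrite contract_val.
move: Ucrit => /and5P[/andP[_ P2] _ _ _ _].
have : (0 < #|~: U|)%N by apply: leq_trans P2.
rewrite card_gt0 => /set0Pn[j]; rewrite inE => jU.
by exists j; rewrite contract_out.
Qed.

Lemma cut_edgesU {a j} : a \in U -> j \notin U -> sedge x a j ->
  (a, j) \in cut_edges x U.
Proof. by move=> aU jU aj; rewrite inE /= aU jU. Qed.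

Lemma unique_out_neighbour {a j j'} : a \in U -> j \notin U -> j' \notin U ->
  sedge x a j -> sedge x a j' -> j = j'.
Proof.
move=> aU jU j'U aj aj'.
have [aj_cut aj'_cut] := (cut_edgesU aU jU aj, cut_edgesU aU j'U aj').
by case: (critical_fst_inj Ucrit _ _ aj_cut aj'_cut erefl).
Qed.

Lemma sum_out_edge {a j} : a \in U -> j \notin U -> sedge x a j ->
  \sum_(j' in ~: U) x a j' = x a j.
Proof.
move=> aU jU aj; rewrite (bigD1 j) ?inE //= big1 ?addr0 // => j'.
rewrite inE => /andP[j'U j'j].
have aj' : a != j' by apply: contraNneq j'U => <-.
have := x_ge0 _ _ aj'; rewrite le_eqVlt => /orP[/eqP <- //|x_gt0].
have eq_jj' := unique_out_neighbour aU jU j'U aj (introT andP (conj aj' x_gt0)).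
by rewrite eq_jj' eqxx in j'j.
Qed.

Lemma contract_weight_edge {i j} : contract_vertex i != contract_vertex j ->
  sedge x i j -> xU (contract_vertex i) (contract_vertex j) = x i j.
Proof.
move=> fij ij; case: (boolP (i \in U)) => iU; case: (boolP (j \in U)) => jU.
- by rewrite (contract_in iU) (contract_in jU).
- by rewrite (contract_in iU) (contract_out jU) /= (sum_out_edge iU jU).
- rewrite (contract_out iU) (contract_in jU) /=.
  under eq_bigr do rewrite xsym.
  by rewrite (sum_out_edge jU iU) // (sedge_sym xsym).
- by rewrite (contract_out iU) (contract_out jU) eqxx in fij.
Qed.

Definition contract_pair (p : 'I_n * 'I_n) : V' * V' :=
  (contract_vertex p.1, contract_vertex p.2).

Section Preimage.
Variable W : {set V'}.
Local Notation A := (contract_vertex @^-1: W).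

(* Cut edges of f^-1 W map to cut edges of W with the same weight ... *)
Lemma contract_pair_cut {p} : p \in cut_edges x A ->
  contract_pair p \in cut_edges xU W /\
  xU (contract_pair p).1 (contract_pair p).2 = x p.1 p.2.
Proof.
rewrite !inE => /and3P[p1A p2A p12].
have fp12 : contract_vertex p.1 != contract_vertex p.2.
  by apply: contraNneq p2A => <-.
have xUp := contract_weight_edge fp12 p12; split => //.
by rewrite /= p1A p2A /sedge fp12 xUp; case/andP: p12.
Qed.

(* ... injectively, as U has at most one neighbour per vertex outside ... *)
Lemma contract_pair_inj : {in cut_edges x A &, injective contract_pair}.
Proof.
move=> [i j] [i' j']; rewrite !inE /= => /and3P[iA jA ij] /and3P[i'A j'A i'j'].
case=> /contract_eq [eq_i|[iU i'U]] /contract_eq [eq_j|[jU j'U]].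
- by rewrite eq_i eq_j.
- subst i'; have iU : i \in U.
    by apply: contraLR iA => /contract_out ->; rewrite -(contract_out jU).
  by rewrite (unique_out_neighbour iU jU j'U ij i'j').
- subst j'; have jU : j \in U.
    by apply: contraLR jA => /contract_out ->; rewrite -(contract_out iU) negbK.
  rewrite (sedge_sym xsym) in ij; rewrite (sedge_sym xsym) in i'j'.
  by rewrite (unique_out_neighbour jU iU i'U ij i'j').
- by move: jA; rewrite (contract_out jU) -(contract_out iU) iA.
Qed.

(* ... and onto delta(W): a positive contracted weight comes from an edge. *)
Lemma contract_pair_onto : cut_edges xU W = contract_pair @: cut_edges x A.
Proof.
apply/eqP; rewrite eqEsubset; apply/andP; split; last first.
  by apply/subsetP => q /imsetP[p /contract_pair_cut[pW _] ->].
apply/subsetP => -[[a|] [b|]]; rewrite inE /= => /and3P[aW bW /andP[ab xab]] //.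
- apply/imsetP; exists (val a, val b); last by rewrite /contract_pair /= !contract_val.
  rewrite !inE /= !contract_val aW bW /sedge xab andbT.
  by apply: contra ab => /eqP/val_inj ->.
- have [j jU xaj] := sum_gt0_exists xab; rewrite inE in jU.
  apply/imsetP; exists (val a, j).
    2: by rewrite /contract_pair /= contract_val contract_out.
  rewrite !inE /= contract_val contract_out // aW bW /sedge xaj andbT.
  by apply: contraNneq jU => <-; apply: valP.
- have [j jU xjb] := sum_gt0_exists xab; rewrite inE in jU.
  apply/imsetP; exists (j, val b).
    2: by rewrite /contract_pair /= contract_val contract_out.
  rewrite !inE /= contract_val contract_out // aW bW /sedge xjb andbT.
  by apply: contraNneq jU => ->; apply: valP.
Qed.

Lemma critical_preimset : critical_cut xU W -> critical_cut x A.
Proof.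
move=> Wcrit; have fst_inj := critical_fst_inj Wcrit.
have snd_inj := critical_snd_inj Wcrit.
move: Wcrit => /and5P[/andP[P1 P2] /eqP C3 /eqP C1 _ _].
have cardA : #|cut_edges x A| = 3%N.
  by rewrite -(card_in_imset contract_pair_inj) -contract_pair_onto C3.
have inW p : p \in cut_edges x A -> contract_pair p \in cut_edges xU W.
  by case/contract_pair_cut.
apply/and5P; split.
- rewrite /proper_cut -preimsetC.
  by rewrite !(leq_trans _ (card_preimset_surj contract_surj)).
- by rewrite cardA.
- rewrite -C1 contract_pair_onto.
  rewrite (@card_filter_imset _ _ _ _ (fun p => x p.1 p.2 == 1)) //.
  + exact: contract_pair_inj.
  + by move=> p /contract_pair_cut[_ ->].
- rewrite -cardA; apply/imset_injP => p q pA qA eq1.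
  by apply: contract_pair_inj => //; apply: fst_inj; rewrite ?inW //= eq1.
- rewrite -cardA; apply/imset_injP => p q pA qA eq2.
  by apply: contract_pair_inj => //; apply: snd_inj; rewrite ?inW //= eq2.
Qed.

Lemma preimset_eqU_card : A = U -> (#|~: W| <= 1)%N.
Proof.
move=> AU; rewrite -(cards1 (@None {i : 'I_n | i \in U})); apply: subset_leq_card.
apply/subsetP => -[a|]; rewrite !inE // => aW.
have : val a \in A by rewrite AU (valP a).
by rewrite inE contract_val (negbTE aW).
Qed.

End Preimage.

Lemma critical_preimset_sub :
  [set contract_vertex @^-1: W | W : {set V'} in [set W | critical_cut xU W]]
    \subset [set A | critical_cut x A] :\ U :\ ~: U.
Proof.
apply/subsetP => A /imsetP[W]; rewrite inE => Wcrit ->{A}.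
move: (Wcrit) => /and5P[/andP[P1 P2] _ _ _ _].
rewrite !inE critical_preimset // andbT; apply/andP; split; apply/eqP => eqA.
- have : contract_vertex @^-1: (~: W) = U by rewrite preimsetC eqA setCK.
  by move/preimset_eqU_card; rewrite setCK => /(leq_trans P1).
- by move: P2 => /leq_trans/(_ (preimset_eqU_card _ eqA)).
Qed.

End Contraction.

Arguments contract_surj {R n x U}.
Arguments critical_preimset_sub {R n x U}.

Theorem mainTheorem12 (R : realFieldType) (n : nat) (theta : R)
    (x : 'I_n -> 'I_n -> R) (k : nat) (U : {set 'I_n}) :
  theta_cyclic theta x ->
  num_critical_cuts x = k ->
  critical_cut x U ->
  (num_critical_cuts (contract_weight U x) <= k - 1)%N.
Proof.
move=> [_ [xsym x01 _ _] _ _ _] <- Ucrit.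
have x_ge0 i j : i != j -> 0 <= x i j by move/x01/andP=> [].
have UC : U \in [set A | critical_cut x A] by rewrite inE.
have UcC : ~: U \in [set A | critical_cut x A] by rewrite inE critical_cutC.
have UneqC : U != ~: U by case/andP: Ucrit => /proper_cut_neqC.
rewrite /num_critical_cuts; apply: (half_card_drop2 UC UcC UneqC).
apply: leq_trans (subset_leq_card (critical_preimset_sub xsym x_ge0 Ucrit)).
rewrite card_imset //; exact: preimset_surj_inj (contract_surj Ucrit).
Qed.
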